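(* Let $X,Y,Z$ be topological spaces and $f:X\times Y\to Z$ a mapping. Suppose that for each $x\in X$, $f_x$ is quasicontinuous and there is a dense set $D_x\subset Y$ such that $f^y$ is quasicontinuous at $x$ for every $y\in D_x$. Then $f$ is lower $X$-quasicontinuous (at every point of $X\times Y$); equivalently, for every nonempty open $V\subset Y$ the set-valued mapping $X\ni x\mapsto f_x(V)\in 2^Z$ is lower quasicontinuous.
   Context: $f_x:Y\to Z$ and $f^y:X\to Z$ are given by $f_x(y)=f^y(x)=f(x,y)$; $2^Z$ is the set of nonempty subsets of $Z$. A mapping $g:X\to Z$ is quasicontinuous at $a$ if for each neighborhood $U$ of $a$ and each neighborhood $W$ of $g(a)$ there is an open $O$ with $\emptyset\neq O\subset U$ and $g(O)\subset W$; $g$ is quasicontinuous if it is so at every point. A set-valued $F:X\to 2^Z$ is lower quasicontinuous if for each $x_0\in X$, each neighborhood $U$ of $x_0$ and each open $W\subset Z$ with $F(x_0)\cap W\ne\emptyset$, there is an open $O$ with $\emptyset\ne O\subset U$ and $F(x)\cap W\ne\emptyset$ for all $x\in O$. $f$ is lower $X$-quasicontinuous at $(a,b)$ if for each neighborhood $U$ of $a$, $V$ of $b$, $W$ of $f(a,b)$, there is an open $O\subset X$ with $\emptyset\ne O\subset U$ and $f(\{x\}\times V)\cap W\ne\emptyset$ for all $x\in O$. *)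

From Stdlib Require Import Classical.

Record TopSpace := {
  carrier :> Type;
  is_open : (carrier -> Prop) -> Prop;
  open_full : is_open (fun _ => True);
  open_inter : forall A B, is_open A -> is_open B -> is_open (fun x => A x /\ B x);
  open_union : forall (F : (carrier -> Prop) -> Prop),
      (forall A, F A -> is_open A) -> is_open (fun x => exists A, F A /\ A x)
}.

Arguments is_open {t} _.

Definition nbhd {T : TopSpace} (x : T) (U : T -> Prop) : Prop :=
  exists O, is_open O /\ O x /\ (forall z, O z -> U z).

Definition dense {T : TopSpace} (D : T -> Prop) : Prop :=
  forall O, is_open O -> (exists z, O z) -> exists z, O z /\ D z.

Definition quasicont_at {X Z : TopSpace} (g : X -> Z) (a : X) : Prop :=
  forall U W, nbhd a U -> nbhd (g a) W ->
    exists O, is_open O /\ (exists x, O x) /\ (forall x, O x -> U x)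
              /\ (forall x, O x -> W (g x)).

Definition quasicont {X Z : TopSpace} (g : X -> Z) : Prop :=
  forall a, quasicont_at g a.

Definition lower_quasicont {X Z : TopSpace} (F : X -> Z -> Prop) : Prop :=
  forall x0 U W, nbhd x0 U -> is_open W -> (exists z, F x0 z /\ W z) ->
    exists O, is_open O /\ (exists x, O x) /\ (forall x, O x -> U x)
              /\ (forall x, O x -> exists z, F x z /\ W z).

Definition lower_X_quasicont_at {X Y Z : TopSpace} (f : X -> Y -> Z)
    (a : X) (b : Y) : Prop :=
  forall U V W, nbhd a U -> nbhd b V -> nbhd (f a b) W ->
    exists O, is_open O /\ (exists x, O x) /\ (forall x, O x -> U x)
              /\ (forall x, O x -> exists y, V y /\ W (f x y)).

Definition section_image {X Y Z : TopSpace} (f : X -> Y -> Z)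
    (V : Y -> Prop) (x : X) : Z -> Prop :=
  fun z => exists y, V y /\ f x y = z.

(* Fix a and neighbourhoods U, V, W of a, b, f(a,b), with W shrunk to an open W0.
   Quasicontinuity of f_a at b gives a nonempty open G inside V with f_a(G) in W0;
   density lets us pick y in G with f^y quasicontinuous at a, and since f(a,y) is in
   W0 this yields a nonempty open O inside U with f(x,y) in W0 for x in O.  The single
   point y then witnesses lower X-quasicontinuity, and lower quasicontinuity of
   x |-> f_x(V) is the special case of open V and W. *)

Lemma nbhd_open {T : TopSpace} (O : T -> Prop) (x : T) :
  is_open O -> O x -> nbhd x O.
Proof. intros HO Ox. exists O. auto. Qed.

Lemma lower_X_quasicont_at_of_dense {X Y Z : TopSpace} (f : X -> Y -> Z)
    (a : X) (b : Y) (D : Y -> Prop) :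
  quasicont_at (f a) b -> dense D ->
  (forall y, D y -> quasicont_at (fun x => f x y) a) ->
  lower_X_quasicont_at f a b.
Proof.
  intros Hqb HD HDq U V W HU HV [W0 [HW0 [W0ab HW0W]]].
  destruct (Hqb V W0 HV (nbhd_open W0 _ HW0 W0ab))
    as [G [HG [HGne [HGV HGW0]]]].
  destruct (HD G HG HGne) as [y [Gy Dy]].
  destruct (HDq y Dy U W0 HU (nbhd_open W0 _ HW0 (HGW0 y Gy)))
    as [O [HO [HOne [HOU HOW0]]]].
  exists O. repeat split; auto.
  intros x Ox. exists y. split; auto.
Qed.

Lemma lower_quasicont_section_image {X Y Z : TopSpace} (f : X -> Y -> Z)
    (V : Y -> Prop) :
  (forall a b, lower_X_quasicont_at f a b) -> is_open V ->
  lower_quasicont (section_image f V).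
Proof.
  intros Hf HV x0 U W HU HW [z [[y [Vy <-]] Wz]].
  destruct (Hf x0 y U V W HU (nbhd_open V _ HV Vy) (nbhd_open W _ HW Wz))
    as [O [HO [HOne [HOU HOW]]]].
  exists O. repeat split; auto.
  intros x Ox. destruct (HOW x Ox) as [y' [Vy' Wy']].
  exists (f x y'). split; [exists y'; auto | exact Wy'].
Qed.

Theorem corollary2p4 (X Y Z : TopSpace) (f : X -> Y -> Z) :
  (forall x : X, quasicont (f x) /\
     exists D : Y -> Prop, dense D /\
       forall y, D y -> quasicont_at (fun x' : X => f x' y) x) ->
  (forall (a : X) (b : Y), lower_X_quasicont_at f a b) /\
  (forall V : Y -> Prop, is_open V -> (exists y, V y) ->
     lower_quasicont (section_image f V)).
Proof.
  intros H.
  assert (Hlower : forall a b, lower_X_quasicont_at f a b).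
  { intros a b. destruct (H a) as [Hq [D [HD HDq]]].
    exact (lower_X_quasicont_at_of_dense f a b D (Hq b) HD HDq). }
  split; [exact Hlower |].
  intros V HV _. exact (lower_quasicont_section_image f V Hlower HV).
Qed.
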